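(* Let $G=(V,E)$ be a graph. Then $V$ can be partitioned into three sets $V_1,V_2,V_3$ such that each $G[V_i]$ is a clique if and only if $G$ has three pairwise vertex-disjoint subgraphs $G_1,G_2,G_3$ with $\sum_{i=1}^3\mathrm{density}(G_i)\geq (|V|-3)/2$.
   Context: A subgraph means an induced subgraph $G[U]$ for a nonempty vertex set $U$. The density of a graph with vertex set $V'$ and edge set $E'$ is $|E'|/|V'|$. In the partition, each part is nonempty. *)

(* A (simple) graph is a symmetric irreflexive relation
   e on a finite vertex type T; the vertex set V is [set: T]. *)
From HB Require Import structures.
From mathcomp Require Import all_boot all_order all_algebra.
Set Implicit Arguments. Unset Strict Implicit. Unset Printing Implicit Defensive.
Import Order.TTheory GRing.Theory Num.Theory.

Definition edges_in (T : finType) (e : rel T) (U : {set T}) : {set {set T}} :=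
  [set A : {set T} | [exists x : T, exists y : T,
      [&& x \in U, y \in U, e x y & A == [set x; y]]]].

Definition density (T : finType) (e : rel T) (U : {set T}) : rat :=
  (#|edges_in e U|%:R / #|U|%:R)%R.

Definition is_clique (T : finType) (e : rel T) (U : {set T}) : Prop :=
  forall x y, x \in U -> y \in U -> x != y -> e x y.

From HB Require Import structures.
From mathcomp Require Import all_boot all_order all_algebra.
From mathcomp Require Import ring lra.
Import Order.TTheory GRing.Theory Num.Theory.
Set Implicit Arguments. Unset Strict Implicit. Unset Printing Implicit Defensive.

(* An induced subgraph on k vertices has at most k(k-1)/2 edges, so its density
   is at most (k-1)/2, with equality exactly for cliques.  Three disjoint nonempty
   vertex sets have at most |V| vertices in total, so their densities sum to at
   most (|V|-3)/2; the bound is attained iff all three sets are cliques and they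
   cover V. *)

Lemma natr_bin2_div (R : numFieldType) (n : nat) : 0 < n ->
  ('C(n, 2)%:R / n%:R = (n%:R - 1) / 2 :> R)%R.
Proof.
move=> n_gt0; have n_neq0 : (n%:R != 0 :> R)%R by rewrite pnatr_eq0 -lt0n.
have pred_n : (n.-1%:R = n%:R - 1 :> R)%R by rewrite -{2}(prednK n_gt0) -natr1 addrK.
have := mul_bin_diag n 1; rewrite bin1 => /(congr1 (fun k => (k%:R : R)%R)).
rewrite !natrM pred_n => bin2E; apply: (mulfI n_neq0).
by rewrite mulrCA mulfV // mulr1 mulrA bin2E; field.
Qed.

Section InducedDensity.

Variables (T : finType) (e : rel T).
Hypotheses (e_sym : symmetric e) (e_irr : irreflexive e).

Local Notation pairs U := [set A : {set T} | A \subset U & #|A| == 2].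

Lemma edges_in_sub_pairs (U : {set T}) : edges_in e U \subset pairs U.
Proof.
apply/subsetP => A; rewrite !inE => /existsP[x /existsP[y /and4P[xU yU exy /eqP->]]].
rewrite cards2 subUset !sub1set xU yU /=.
by have -> : x != y by apply/eqP => xy; rewrite xy e_irr in exy.
Qed.

Lemma clique_pairs_sub_edges_in (U : {set T}) :
  is_clique e U -> pairs U \subset edges_in e U.
Proof.
move=> cl; apply/subsetP => A; rewrite !inE => /andP[AU /cards2P[x [y [xy AE]]]].
move: AU; rewrite AE subUset !sub1set => /andP[xU yU].
apply/existsP; exists x; apply/existsP; exists y.
by rewrite xU yU eqxx andbT; exact: cl.
Qed.

Lemma pairs_sub_edges_in_clique (U : {set T}) :
  pairs U \subset edges_in e U -> is_clique e U.
Proof.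
move=> /subsetP sub x y xU yU xy.
have : [set x; y] \in pairs U by rewrite inE cards2 xy subUset !sub1set xU yU.
move=> /sub; rewrite inE => /existsP[x' /existsP[y' /and4P[_ _ exy /eqP xyE]]].
move: (set21 x y) (set22 x y); rewrite xyE => /set2P[] ? /set2P[] ?; subst x y;
  by [| rewrite eqxx in xy | rewrite e_sym].
Qed.

Lemma card_edges_in_le (U : {set T}) : #|edges_in e U| <= 'C(#|U|, 2).
Proof. by rewrite -cards_draws subset_leq_card ?edges_in_sub_pairs. Qed.

Lemma card_edges_in_bin2 (U : {set T}) :
  #|edges_in e U| = 'C(#|U|, 2) <-> is_clique e U.
Proof.
rewrite -cards_draws; have [_ card_eq] := subset_leqif_cards (edges_in_sub_pairs U).
split => [/eqP | cl].
- by rewrite card_eq => /eqP edgesE; apply: pairs_sub_edges_in_clique; rewrite -edgesE.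
- by apply/eqP; rewrite card_eq eqEsubset edges_in_sub_pairs clique_pairs_sub_edges_in.
Qed.

Lemma density_le_half (U : {set T}) : U != set0 ->
  (density e U <= (#|U|%:R - 1) / 2)%R.
Proof.
rewrite -card_gt0 => U_gt0; rewrite -natr_bin2_div // ler_wpM2r ?invr_ge0 //.
by rewrite ler_nat card_edges_in_le.
Qed.

Lemma density_half_clique (U : {set T}) : U != set0 ->
  density e U = ((#|U|%:R - 1) / 2)%R <-> is_clique e U.
Proof.
rewrite -card_gt0 => U_gt0; rewrite -natr_bin2_div // -card_edges_in_bin2 /density.
have U_neq0 : (#|U|%:R != 0 :> rat)%R by rewrite pnatr_eq0 -lt0n.
split => [/(mulIf (invr_neq0 U_neq0))/eqP | ->] //.
by rewrite eqr_nat => /eqP.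
Qed.

End InducedDensity.

Lemma disjoint_neq (T : finType) (A B : {set T}) :
  A != set0 -> [disjoint A & B] -> A != B.
Proof.
move=> A0 /disjoint_setI0 AB0; apply: contra_neq A0 => AB.
by rewrite -AB0 -AB setIid.
Qed.

Lemma cover_set3 (T : finType) (A B C : {set T}) :
  cover [set A; B; C] = A :|: B :|: C.
Proof. by rewrite /cover !bigcup_setU !big_set1. Qed.

Lemma partition3_blocks (T : finType) (P : {set {set T}}) (D : {set T}) :
  partition P D -> #|P| = 3 ->
  exists U1 U2 U3 : {set T},
    [/\ P = [set U1; U2; U3], U1 != set0, U2 != set0, U3 != set0 &
        [/\ [disjoint U1 & U2], [disjoint U1 & U3] & [disjoint U2 & U3]]].
Proof.
move=> /and3P[_ /trivIsetP trivP set0P] cardP.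
have /card_gt2P[U1 [U2 [U3 [[P1 P2 P3] [n12 n23 n31]]]]] : 2 < #|P| by rewrite cardP.
have nonempty A : A \in P -> A != set0 by move=> AP; apply: contraNneq set0P => <-.
exists U1, U2, U3; split; rewrite ?nonempty //.
- apply/eqP; rewrite eq_sym eqEcard !subUset !sub1set P1 P2 P3 cardP /=.
  by rewrite -setUA cardsU1 cards2 !inE negb_or n12 n23 eq_sym n31.
- by split; apply: trivP; rewrite // eq_sym.
Qed.

Section ThreeDisjointSets.

Variables (T : finType) (U1 U2 U3 : {set T}).
Hypotheses (n1 : U1 != set0) (n2 : U2 != set0) (n3 : U3 != set0).
Hypotheses (d12 : [disjoint U1 & U2]) (d13 : [disjoint U1 & U3]).
Hypothesis (d23 : [disjoint U2 & U3]).

Lemma card_set3_disjoint : #|[set U1; U2; U3]| = 3.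
Proof.
have n12 := disjoint_neq n1 d12; have n13 := disjoint_neq n1 d13.
have n23 := disjoint_neq n2 d23.
by rewrite -setUA cardsU1 cards2 !inE negb_or n12 n13 n23.
Qed.

Lemma card_setU3_disjoint : #|U1 :|: U2 :|: U3| = #|U1| + #|U2| + #|U3|.
Proof.
rewrite !cardsU (disjoint_setI0 d12) setIUl (disjoint_setI0 d13).
by rewrite (disjoint_setI0 d23) setU0 cards0 !subn0.
Qed.

Lemma partition_set3 (D : {set T}) :
  partition [set U1; U2; U3] D = (U1 :|: U2 :|: U3 == D).
Proof.
have triv : trivIset [set U1; U2; U3].
  apply/trivIsetP => A B; rewrite !inE.
  by move=> /orP[/orP[]|]/eqP-> /orP[/orP[]|]/eqP->; rewrite ?eqxx // => _; rewrite disjoint_sym.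
by rewrite /partition cover_set3 triv !inE !negb_or !(eq_sym set0) n1 n2 n3 /= andbT.
Qed.

End ThreeDisjointSets.

Theorem lemma5 (T : finType) (e : rel T) (e_sym : symmetric e) (e_irr : irreflexive e) :
  (exists P : {set {set T}},
      [/\ partition P [set: T], #|P| = 3 & forall A, A \in P -> is_clique e A])
  <->
  (exists U1 U2 U3 : {set T},
      [/\ U1 != set0, U2 != set0, U3 != set0,
          [/\ [disjoint U1 & U2], [disjoint U1 & U3] & [disjoint U2 & U3]] &
          ((#|T|%:R - 3%:R) / 2%:R <= density e U1 + density e U2 + density e U3)%R]).
Proof.
split.
- move=> [P [partP cardP cliqueP]].
  have densP A : A \in P -> density e A = ((#|A|%:R - 1) / 2)%R.
    move=> AP; have A0 : A != set0 by apply: contraTneq AP => ->; case/and3P: partP.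
    by apply/(density_half_clique e_sym e_irr A0); apply: cliqueP.
  have [U1 [U2 [U3 [PE n1 n2 n3 [d12 d13 d23]]]]] := partition3_blocks partP cardP.
  move: partP; rewrite PE partition_set3 // => /eqP coverT.
  have cardT : #|T| = #|U1| + #|U2| + #|U3|.
    by rewrite -cardsT -coverT card_setU3_disjoint.
  exists U1, U2, U3; split => //.
  rewrite !densP ?PE ?inE ?eqxx ?orbT // cardT !natrD; lra.
- move=> [U1 [U2 [U3 [n1 n2 n3 [d12 d13 d23] dens_sum]]]].
  have le1 := density_le_half e_irr n1; have le2 := density_le_half e_irr n2.
  have le3 := density_le_half e_irr n3.
  have card_le : ((#|U1|%:R + #|U2|%:R + #|U3|%:R : rat) <= #|T|%:R)%R.
    by rewrite -!natrD ler_nat -card_setU3_disjoint // max_card.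
  exists [set U1; U2; U3]; split.
  + rewrite partition_set3 // eqEcard subsetT cardsT card_setU3_disjoint //.
    by rewrite -(ler_nat rat) !natrD; lra.
  + exact: card_set3_disjoint.
  + move=> A; rewrite !inE => /orP[/orP[]|]/eqP->;
      apply/(density_half_clique e_sym e_irr) => //; lra.
Qed.
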